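(* Let $(\Omega,\mathcal{F},\mathbb{P})$ be a complete probability space and $X=\{X_t\}_{t\geq0}$ a real-valued stochastic process with almost surely continuous paths such that $X_t$ has a density (with respect to Lebesgue measure) for every $t\in(0,\infty)$. Let $AP$ be a set of atomic formulas, each $a\in AP$ interpreted by a Borel set $B_a\subset\mathbb{R}$ whose boundary $\partial B_a$ has Lebesgue measure zero. Then for every MTL-formula $\phi$ there exists $K\in\mathcal{F}\otimes\mathcal{B}([0,\infty))$ such that (i) $\{t : (\omega,t)\in K\}$ is almost surely closed; (ii) $\{t : (\omega,t)\in K\}$ has Lebesgue measure zero almost surely; (iii) $\mathbb{P}(\{\omega : (\omega,t)\in K\})=0$ for every $t\in(0,\infty)$; (iv) $\partial\llbracket\phi\rrbracket_\omega\subset\{t : (\omega,t)\in K\}$.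
   Context: MTL-formulas are built from atomic formulas by $\lnot$, $\wedge$, and until operators $\mathcal{U}_I$ ($I$ an interval in $[0,\infty)$), with $\Diamond_I\phi:=\top\,\mathcal{U}_I\phi$ meaning $\exists s\in I$: $X(\omega),t+s\models\phi$; $X(\omega),t\models a$ iff $X_t(\omega)\in B_a$. $\llbracket\phi\rrbracket_\omega:=\{t\geq0 : X(\omega),t\models\phi\}$, and $\partial$ denotes the boundary in $[0,\infty)$. *)

From HB Require Import structures.
From mathcomp Require Import all_boot all_order all_algebra.
From mathcomp Require Import all_classical all_reals all_analysis.
Set Implicit Arguments. Unset Strict Implicit. Unset Printing Implicit Defensive.
Import Order.TTheory GRing.Theory Num.Theory.
Import numFieldNormedType.Exports.
Local Open Scope classical_set_scope.
Local Open Scope ring_scope.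

(** MTL formulas over atomic propositions [AP]; [MTrue] is the constant ⊤
    used in Diamond_I phi := ⊤ U_I phi. *)
Inductive mtl (R : realType) (AP : Type) : Type :=
| MTrue : mtl R AP
| MAtom : AP -> mtl R AP
| MNot : mtl R AP -> mtl R AP
| MAnd : mtl R AP -> mtl R AP -> mtl R AP
| MUntil : interval R -> mtl R AP -> mtl R AP -> mtl R AP.

Arguments MTrue {R AP}.

Fixpoint mtl_wf (R : realType) (AP : Type) (phi : mtl R AP) : Prop :=
  match phi with
  | MTrue => True
  | MAtom _ => True
  | MNot f => mtl_wf f
  | MAnd f g => mtl_wf f /\ mtl_wf g
  | MUntil J f g => (forall s : R, s \in J -> 0 <= s) /\ mtl_wf f /\ mtl_wf g
  end.

Fixpoint mtl_sat (R : realType) (AP : Type) (B : AP -> set R) (x : R -> R)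
    (phi : mtl R AP) (t : R) : Prop :=
  match phi with
  | MTrue => True
  | MAtom a => B a (x t)
  | MNot f => ~ mtl_sat B x f t
  | MAnd f g => mtl_sat B x f t /\ mtl_sat B x g t
  | MUntil J f g => exists s : R, s \in J /\ mtl_sat B x g (t + s) /\
       (forall u : R, 0 < u < s -> mtl_sat B x f (t + u))
  end.

Definition mtl_sem (R : realType) (AP : Type) (B : AP -> set R) (x : R -> R)
    (phi : mtl R AP) : set R :=
  [set t | 0 <= t /\ mtl_sat B x phi t].

Definition bdry0 (R : realType) (A : set R) : set R :=
  [set t | 0 <= t /\ forall e : R, 0 < e ->
     (exists u, 0 <= u /\ `|u - t| < e /\ A u) /\
     (exists u, 0 <= u /\ `|u - t| < e /\ ~ A u)].

Definition bdry (R : realType) (A : set R) : set R :=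
  closure A `\` interior A.

Definition has_density d (T : measurableType d) (R : realType)
    (P : probability T R) (Y : T -> R) : Prop :=
  exists f : R -> R, measurable_fun setT f /\ (forall x, 0 <= f x) /\
    forall A : set R, measurable A ->
      P (Y @^-1` A) = (\int[@lebesgue_measure R]_(x in A) (f x)%:E)%E.

(** Along a path [x] that is continuous on [[0, oo)], the truth value of [phi]
    can only switch at a critical time: a time [t] at which [x (t + c)] lies on
    the boundary of some [B a], where [c >= 0] is a sum of endpoints of Until
    intervals.  Away from such times every atom is locally constant, and local
    constancy propagates through negation, conjunction and Until.  The critical
    times form a closed set.
    The set [K] collects time [0], all times of the null set of discontinuous
    paths, and the critical pairs [(w, t)] with [t > 0].  Hitting a closed set at
    time [t] can be tested along rational times, so [K] is measurable.  For
    [t > 0] its [t]-section is [P]-null because [X t] has a density and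
    [bdry (B a)] is Lebesgue-null, and by Fubini almost every [w]-section is
    Lebesgue-null. *)

From HB Require Import structures.
From mathcomp Require Import all_boot all_order all_algebra.
From mathcomp Require Import all_classical all_reals all_analysis.
From mathcomp Require Import lra ring.
Import Order.TTheory GRing.Theory Num.Theory.
Import numFieldNormedType.Exports.
Local Open Scope classical_set_scope.
Local Open Scope ring_scope.
Set Implicit Arguments.
Unset Strict Implicit.
Unset Printing Implicit Defensive.

Lemma min_gt0_le (R : realDomainType) (a b : R) : 0 < a -> 0 < b ->
  [/\ 0 < Num.min a b, Num.min a b <= a & Num.min a b <= b].
Proof. by move=> a_gt0 b_gt0; rewrite lt_min a_gt0 b_gt0 !ge_min !lexx orbT. Qed.

Section IntervalEnds.
Variable R : realType.
Implicit Types (l u : itv_bound R) (J : interval R) (x y s c : R).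

Definition above_lb l x : bool :=
  match l with BSide b a => if b then a <= x else a < x | BInfty b => b end.

Definition below_ub u x : bool :=
  match u with BSide b a => if b then x < a else x <= a | BInfty b => ~~ b end.

Definition bound_point (b : itv_bound R) : seq R :=
  if b is BSide _ a then [:: a] else [::].

Definition itv_ends J : seq R :=
  let: Interval l u := J in bound_point l ++ bound_point u.

Lemma in_itv_bounds x l u : (x \in Interval l u) = above_lb l x && below_ub u x.
Proof. by rewrite in_itv; case: l => [[] a|[]]; case: u => [[] a'|[]]. Qed.

Lemma above_lb_le l x y : above_lb l x -> x <= y -> above_lb l y.
Proof. by case: l => [[] a|[]] //= ax xy; [exact: le_trans xy|exact: lt_le_trans xy]. Qed.

Lemma below_ub_le u x y : below_ub u y -> x <= y -> below_ub u x.
Proof. by case: u => [[] a|[]] //= ya xy; [exact: le_lt_trans ya|exact: le_trans ya]. Qed.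

Lemma above_lb_exit l s x : above_lb l s -> ~~ above_lb l x ->
  exists2 a, a \in bound_point l & x <= a <= s /\ forall y, a < y -> above_lb l y.
Proof.
move=> ls lx; have xs : x < s by rewrite ltNge; apply: contra lx; exact: above_lb_le.
case: l ls lx => [b a|[]] //= ls lx; exists a; first exact: mem_head.
split; last by case: b {ls lx} => y //; exact: ltW.
by case: b ls lx => /= ls lx; apply/andP; split; lra.
Qed.

Lemma below_ub_exit u s x : below_ub u s -> ~~ below_ub u x ->
  exists2 a, a \in bound_point u & s <= a <= x /\ forall y, y < a -> below_ub u y.
Proof.
move=> us ux; have sx : s < x by rewrite ltNge; apply: contra ux => /(below_ub_le us).
case: u us ux => [b a|[]] //= us ux; exists a; first exact: mem_head.
split; last by case: b {us ux} => y //; exact: ltW.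
by case: b us ux => /= us ux; apply/andP; split; lra.
Qed.

Lemma itv_ends_ge0 J s c : (forall y, y \in J -> 0 <= y) -> s \in J ->
  c \in itv_ends J -> 0 <= c.
Proof.
case: J => l u J_ge0 sJ; have s_ge0 := J_ge0 s sJ; move: sJ.
rewrite in_itv_bounds => /andP[ls us]; rewrite mem_cat => /orP[].
- case: l J_ge0 ls => [b a|[]] //= J_ge0 ls; rewrite inE => /eqP->.
  rewrite leNgt; apply/negP => a_lt0.
  suff : 0 <= a / 2 by lra.
  apply: J_ge0; rewrite in_itv_bounds; apply/andP; split.
    by case: (b) => /=; [apply: ltW|]; lra.
  by apply: below_ub_le us _; lra.
- case: u {J_ge0} us => [b a|[]] //= us; rewrite inE => /eqP->.
  by case: b us => /= us; [exact: ltW (le_lt_trans s_ge0 us)|exact: le_trans us].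
Qed.

Lemma itv_exit_end J s s0 e : s \in J -> s0 \notin J -> 0 < e ->
  exists2 c, c \in itv_ends J & ((s <= c <= s0) \/ (s0 <= c <= s)) /\
    exists2 s', s' \in J & `|s' - c| < e.
Proof.
case: J => l u; rewrite !in_itv_bounds => /andP[ls us].
rewrite negb_and => /orP[nl|nu] e_gt0.
- have [a al [/andP[s0a a_s] Ha]] := above_lb_exit ls nl.
  exists a; first by rewrite mem_cat al.
  split; first by right; rewrite s0a a_s.
  have [s_near|s_far] := leP s (a + e / 2).
    by exists s; rewrite ?in_itv_bounds ?ls ?us // ltr_distl; apply/andP; split; lra.
  exists (a + e / 2); last by rewrite ltr_distl; apply/andP; split; lra.
  rewrite in_itv_bounds; apply/andP; split; first by apply: Ha; lra.
  by apply: below_ub_le us _; lra.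
- have [a au [/andP[sa as0] Ha]] := below_ub_exit us nu.
  exists a; first by rewrite mem_cat au orbT.
  split; first by left; rewrite sa as0.
  have [s_near|s_far] := leP (a - e / 2) s.
    by exists s; rewrite ?in_itv_bounds ?ls ?us // ltr_distl; apply/andP; split; lra.
  exists (a - e / 2); last by rewrite ltr_distl; apply/andP; split; lra.
  rewrite in_itv_bounds; apply/andP; split; last by apply: Ha; lra.
  by apply: above_lb_le ls _; lra.
Qed.

Lemma itv_ends_mem0 J : (forall y, y \in J -> 0 <= y) -> 0 \in J -> 0 \in itv_ends J.
Proof.
move=> J_ge0 J0; have Jm1 : -1 \notin J.
  by apply/negP => /J_ge0; lra.
have [c cE [c_btw _]] := itv_exit_end J0 Jm1 ltr01.
have c_ge0 := itv_ends_ge0 J_ge0 J0 cE.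
suff -> : (0 : R) = c by [].
by case: c_btw => /andP[? ?]; lra.
Qed.

End IntervalEnds.

Section LocalConstancy.
Variable R : realType.
Implicit Types (A : set R) (t r : R).

Definition const_near A t r :=
  (forall u, 0 <= u -> `|u - t| < r -> A u) \/
  (forall u, 0 <= u -> `|u - t| < r -> ~ A u).

Lemma const_nearW A t r r' : r' <= r -> const_near A t r -> const_near A t r'.
Proof.
by move=> r'r [H|H]; [left|right] => u u0 ut; apply: H => //; exact: lt_le_trans r'r.
Qed.

Lemma const_near_mem A t r w : const_near A t r -> 0 <= w -> `|w - t| < r -> A w ->
  forall u, 0 <= u -> `|u - t| < r -> A u.
Proof. by move=> [H|H] // w0 wt /(H w w0 wt). Qed.

Lemma not_bdry0_const_near A t : 0 <= t -> ~ bdry0 A t ->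
  exists2 r, 0 < r & const_near A t r.
Proof.
move=> t0 nb; apply: contrapT => H; apply: nb; split => // e e0.
split; apply: contrapT => He; apply: H; exists e => //.
- by right => u u0 ut Au; apply: He; exists u.
- by left => u u0 ut; apply: contrapT => nAu; apply: He; exists u.
Qed.

Lemma const_near_bdry0 A t r : 0 < r -> const_near A t r -> ~ bdry0 A t.
Proof.
move=> r0 [H|H] [_ /(_ r r0) [[u [u0 [ut Au]]] [v [v0 [vt nAv]]]]].
- exact/nAv/H.
- exact: H Au.
Qed.

Lemma bdry0C A t : bdry0 (~` A) t -> bdry0 A t.
Proof.
move=> [t0 H]; split => // e /H[[u [u0 [ut nAu]]] [v [v0 [vt nnAv]]]].
by split; [exists v; split => //; split => //; exact: contrapT|exists u].
Qed.

Lemma bdry0I A B t : bdry0 (A `&` B) t -> bdry0 A t \/ bdry0 B t.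
Proof.
move=> ABt; have t0 := ABt.1; apply: contrapT => /not_orP[nA nB].
have [r1 r1_gt0 cA] := not_bdry0_const_near t0 nA.
have [r2 r2_gt0 cB] := not_bdry0_const_near t0 nB.
have [r_gt0 r_le1 r_le2] := min_gt0_le r1_gt0 r2_gt0.
apply: (const_near_bdry0 r_gt0 _ ABt).
case: (const_nearW r_le1 cA) => [HA|HA]; last by right => u u0 ut [/(HA u u0 ut)].
case: (const_nearW r_le2 cB) => [HB|HB]; last by right => u u0 ut [_ /(HB u u0 ut)].
by left => u u0 ut; split; [exact: HA|exact: HB].
Qed.

Lemma bdry0_nonneg A : bdry0 [set t | 0 <= t /\ A t] `<=` bdry0 A.
Proof.
move=> t [t0 H]; split => // e /H[[u [u0 [ut [_ Au]]]] [v [v0 [vt nAv]]]].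
by split; [exists u|exists v; split => //; split => // Av; exact: nAv].
Qed.

Lemma common_radius (s : seq R) (Q : R -> R -> Prop) :
  (forall c r r', r' <= r -> Q c r -> Q c r') ->
  (forall c, c \in s -> exists2 r, 0 < r & Q c r) ->
  exists2 r, 0 < r & forall c, c \in s -> Q c r.
Proof.
move=> Q_anti; elim: s => [|a s IH] Hs; first by exists 1.
have [ra ra_gt0 Qa] := Hs a (mem_head a s).
have [rs rs_gt0 Qs] : exists2 r, 0 < r & forall c, c \in s -> Q c r.
  by apply: IH => c cs; apply: Hs; rewrite in_cons cs orbT.
have [r_gt0 r_le_a r_le_s] := min_gt0_le ra_gt0 rs_gt0.
exists (Num.min ra rs) => // c; rewrite in_cons => /orP[/eqP->|cs].
  exact: Q_anti r_le_a Qa.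
exact: Q_anti r_le_s (Qs c cs).
Qed.

End LocalConstancy.

Section ContinuousPaths.
Variables (R : realType) (x : R -> R).
Hypothesis x_cont : {within `[0, +oo[, continuous x}.

Lemma nbhs_continuous_nonneg t A : 0 <= t -> nbhs (x t) A ->
  exists2 e, 0 < e & forall u, 0 <= u -> `|u - t| < e -> A (x u).
Proof.
move=> t0 nA; have xA := @x_cont t A nA.
have : within `[0, +oo[ (nbhs t) (x @^-1` A).
  by rewrite nbhs_subspace_in //= in_itv /= andbT.
move=> [e e0 He]; exists e => // u u0 ut.
by apply: He; rewrite /= ?in_itv /= ?andbT // distrC.
Qed.

Lemma bdry0_preimage A t : bdry0 (x @^-1` A) t -> bdry A (x t).
Proof.
move=> At; have t0 := At.1; apply: contrapT => nbd.
have [nc|ni] : ~ closure A (x t) \/ interior A (x t).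
  by apply: contrapT => /not_orP[h1 h2]; apply: nbd; split => //; exact: contrapT.
- have [V nV AV] : exists2 V, nbhs (x t) V & A `&` V = set0.
    apply: contrapT => H; apply: nc => V nV; apply/set0P/eqP => AV0.
    by apply: H; exists V.
  have [e e0 He] := nbhs_continuous_nonneg t0 nV.
  apply: (const_near_bdry0 e0 _ At); right => u u0 ut Au.
  have : (A `&` V) (x u) by split => //; exact: He.
  by rewrite AV.
- have [e e0 He] := nbhs_continuous_nonneg t0 ni.
  by apply: (const_near_bdry0 e0 _ At); left => u u0 ut; exact: He.
Qed.

Lemma closed_nonneg_preimage D : closed D -> closed [set t | 0 <= t /\ D (x t)].
Proof.
move: x_cont => /continuous_closedP xD /xD /closed_subspaceP[V cV VE].
have -> : [set t | 0 <= t /\ D (x t)] = V `&` `[0, +oo[.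
  by rewrite VE; apply/seteqP; split => t /=; rewrite in_itv /= andbT => -[].
by apply: closedI cV _; exact: rray_closed.
Qed.

End ContinuousPaths.

Section Until.
Variable R : realType.

Lemma exists_small_pos (s e : R) : 0 < s -> 0 < e -> exists2 u, 0 < u < s & u < e.
Proof.
move=> s_gt0 e_gt0; have [m_gt0 m_le_s m_le_e] := min_gt0_le s_gt0 e_gt0.
by exists (Num.min s e / 2); [apply/andP; split|]; lra.
Qed.

Definition until (F G : set R) (J : interval R) : set R :=
  [set t | exists s, s \in J /\ G (t + s) /\ forall u, 0 < u < s -> F (t + u)].

Section UntilTransfer.
Variables (F G : set R) (J : interval R) (t0 r : R).
Hypotheses (J_ge0 : forall s, s \in J -> 0 <= s) (r_gt0 : 0 < r).
Hypothesis ends_const :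
  forall c, c \in itv_ends J -> const_near F (t0 + c) r /\ const_near G (t0 + c) r.

Lemma until_transfer_notF t t' : (forall u, 0 <= u -> `|u - t0| < r -> ~ F u) ->
  0 <= t -> 0 <= t' -> `|t - t0| < r / 4 -> `|t' - t0| < r / 4 ->
  until F G J t -> until F G J t'.
Proof.
rewrite !ltr_distl => nF t_ge0 t'_ge0 /andP[? ?] /andP[? ?] [s [sJ [Gs Fs]]].
have s0 : s = 0.
  apply/eqP; rewrite eq_le J_ge0 // andbT leNgt; apply/negP => s_gt0.
  have [u /andP[? ?] ?] : exists2 u, 0 < u < s & u < r / 2.
    by apply: exists_small_pos => //; lra.
  apply: (nF (t + u)); [lra|rewrite ltr_distl; apply/andP; split; lra|].
  by apply: Fs; apply/andP.
move: sJ Gs; rewrite s0 addr0 => J0 Gt.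
have [_ cG] := ends_const (itv_ends_mem0 J_ge0 J0); rewrite addr0 in cG.
exists 0; split => //; split; last by move=> u /andP[? ?]; lra.
by rewrite addr0; apply: (const_near_mem cG t_ge0 _ Gt) => //;
  rewrite ltr_distl; apply/andP; split; lra.
Qed.

(* The witness [s] for [t] is shifted to [s + t - t'] for [t']; if that leaves
   [J], it crosses an endpoint [c] near which [G] holds and [F] is constant. *)
Lemma until_transfer_F t t' : (forall u, 0 <= u -> `|u - t0| < r -> F u) ->
  0 <= t -> 0 <= t' -> `|t - t0| < r / 4 -> `|t' - t0| < r / 4 ->
  until F G J t -> until F G J t'.
Proof.
rewrite !ltr_distl => Ft0 t_ge0 t'_ge0 /andP[? ?] /andP[? ?] [s [sJ [Gs Fs]]].
have s_ge0 := J_ge0 sJ.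
have F_t0 v : 0 <= v -> t0 - r < v < t0 + r -> F v.
  by move=> v_ge0 vt0; apply: Ft0; rewrite ?ltr_distl.
have F_t v : t < v < t + s -> F v.
  move=> /andP[? ?]; have -> : v = t + (v - t) by ring.
  by apply: Fs; apply/andP; split; lra.
have [s'J|s'J] := boolP (s + t - t' \in J).
  exists (s + t - t'); split => //; have -> : t' + (s + t - t') = t + s by ring.
  split => // u /andP[? ?]; have [?|?] := leP (t' + u) t.
    by apply: F_t0; [|apply/andP; split]; lra.
  by apply: F_t; apply/andP; split; lra.
have r4_gt0 : 0 < r / 4 by lra.
have [c cE [c_btw [s'' s''J]]] := itv_exit_end sJ s'J r4_gt0.
rewrite ltr_distl => /andP[? ?].
have [? ?] : s - r / 2 < c /\ c < s + r / 2 by case: c_btw => /andP[? ?]; split; lra.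
have [cF cG] := ends_const cE.
have s''_ge0 := J_ge0 s''J.
exists s''; split => //; split.
  apply: (const_near_mem cG _ _ Gs); rewrite ?ltr_distl; try (apply/andP; split); lra.
move=> u /andP[? ?]; have [?|?] := leP (t' + u) t.
  by apply: F_t0; [|apply/andP; split]; lra.
have [?|?] := ltP (t' + u) (t + s).
  by apply: F_t; apply/andP; split; lra.
have [?|?] := ltP (t' + u) (t0 + r).
  by apply: F_t0; [|apply/andP; split]; lra.
have s_gt0 : 0 < s by lra.
have [v /andP[? ?] ?] := exists_small_pos s_gt0 r4_gt0.
have Fv : F (t + s - v) by apply: F_t; apply/andP; split; lra.
by apply: (const_near_mem cF _ _ Fv); rewrite ?ltr_distl; try (apply/andP; split); lra.
Qed.

Lemma until_const_near : 0 <= t0 -> const_near F t0 r -> const_near (until F G J) t0 (r / 4).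
Proof.
move=> t0_ge0 cF.
have transfer t t' : 0 <= t -> 0 <= t' -> `|t - t0| < r / 4 -> `|t' - t0| < r / 4 ->
    until F G J t -> until F G J t'.
  by case: cF => [Ft0|nFt0]; [exact: until_transfer_F|exact: until_transfer_notF].
have t0_near : `|t0 - t0| < r / 4 by rewrite subrr normr0 divr_gt0.
have [Ut0|nUt0] := pselect (until F G J t0).
  by left => u u0 ut; exact: transfer Ut0.
by right => u u0 ut Uu; apply/nUt0/(transfer u).
Qed.

End UntilTransfer.

Lemma bdry0_until F G J t : (forall s, s \in J -> 0 <= s) -> bdry0 (until F G J) t ->
  bdry0 F t \/
  exists2 c, c \in itv_ends J & 0 <= c /\ (bdry0 F (t + c) \/ bdry0 G (t + c)).
Proof.
move=> J_ge0 Ut; have t_ge0 := Ut.1; apply: contrapT => /not_orP[nF nE].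
have [s sJ] : exists s, s \in J.
  by have [_ /(_ 1 ltr01) [[_ [_ [_ [s [sJ _]]]]] _]] := Ut; exists s.
have [r1 r1_gt0 cF] := not_bdry0_const_near t_ge0 nF.
have [r2 r2_gt0 cE] : exists2 r, 0 < r & forall c, c \in itv_ends J ->
    const_near F (t + c) r /\ const_near G (t + c) r.
  apply: common_radius => [c r r' r'r [? ?]|c cE].
    by split; exact: const_nearW r'r _.
  have c_ge0 := itv_ends_ge0 J_ge0 sJ cE.
  have tc_ge0 : 0 <= t + c by exact: addr_ge0.
  have [nFc nGc] : ~ bdry0 F (t + c) /\ ~ bdry0 G (t + c).
    by split => ?; apply: nE; exists c => //; split => //; [left|right].
  have [ra ra_gt0 cFc] := not_bdry0_const_near tc_ge0 nFc.
  have [rb rb_gt0 cGc] := not_bdry0_const_near tc_ge0 nGc.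
  have [m_gt0 m_le_a m_le_b] := min_gt0_le ra_gt0 rb_gt0.
  exists (Num.min ra rb) => //.
  by split; [exact: const_nearW m_le_a cFc|exact: const_nearW m_le_b cGc].
have [r_gt0 r_le1 r_le2] := min_gt0_le r1_gt0 r2_gt0.
have r4_gt0 : 0 < Num.min r1 r2 / 4 by lra.
apply: (const_near_bdry0 r4_gt0 _ Ut); apply: until_const_near => //.
- by move=> c /cE[? ?]; split; exact: const_nearW r_le2 _.
- exact: const_nearW r_le1 cF.
Qed.

End Until.

Lemma closed_bdry (R : realType) (A : set R) : closed (bdry A).
Proof.
rewrite /bdry setDE; apply: closedI; first exact: closed_closure.
by rewrite closedC; exact: open_interior.
Qed.

Section CriticalTimes.
Variables (R : realType) (AP : Type) (B : AP -> set R).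

(* The times at which the truth value of [phi] along [x] may switch. *)
Fixpoint mtl_crit (x : R -> R) (phi : mtl R AP) : set R :=
  match phi with
  | MTrue => set0
  | MAtom a => [set t | 0 <= t /\ bdry (B a) (x t)]
  | MNot f => mtl_crit x f
  | MAnd f g => mtl_crit x f `|` mtl_crit x g
  | MUntil J f g => mtl_crit x f `|`
      \bigcup_(c in [set` [seq c <- itv_ends J | 0 <= c]])
        [set t | 0 <= t /\ (mtl_crit x f `|` mtl_crit x g) (t + c)]
  end.

Lemma mtl_crit_ge0 x phi t : mtl_crit x phi t -> 0 <= t.
Proof.
elim: phi t => [|a|f IH|f IHf g IHg|J f IHf g IHg] t /=.
- by [].
- by case.
- exact: IH.
- by case=> [/IHf|/IHg].
- by case=> [/IHf|[c _ []]].
Qed.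

Variables (x : R -> R).
Hypothesis x_cont : {within `[0, +oo[, continuous x}.

Lemma bdry0_mtl_sat phi : mtl_wf phi -> bdry0 (mtl_sat B x phi) `<=` mtl_crit x phi.
Proof.
elim: phi => [|a|f IH|f IHf g IHg|J f IHf g IHg] /= wf t.
- by case=> _ /(_ 1 ltr01) [_ [u [_ [_ []]]]].
- by move=> At; split; [exact: At.1|exact: bdry0_preimage].
- by move/bdry0C/IH; apply.
- by case: wf => wf1 wf2 /bdry0I[/IHf Ft|/IHg Gt]; [left; exact: Ft|right; exact: Gt].
- case: wf => J_ge0 [wf1 wf2] Ut; have t_ge0 := Ut.1.
  case/(bdry0_until J_ge0): Ut => [/IHf Ft|[c cE [c_ge0 Fc]]]; first by left; exact: Ft.
  right; exists c; first by rewrite /= mem_filter c_ge0.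
  by split => //; case: Fc => [/IHf Ft|/IHg Gt]; [left; exact: Ft|right; exact: Gt].
Qed.

Lemma closed_mtl_crit phi : closed (mtl_crit x phi).
Proof.
elim: phi => [|a|f IH|f IHf g IHg|J f IHf g IHg] //=.
- exact: closed0.
- exact (closed_nonneg_preimage x_cont (@closed_bdry _ (B a))).
- exact: closedU.
apply: closedU => //; rewrite bigcup_seq; apply: closed_bigsetU => c _.
have shift_cont : {within `[0, +oo[, continuous (fun t : R => t + c)}.
  by apply: continuous_subspaceT => t; apply: cvgD; [exact: cvg_id|exact: cvg_cst].
exact: (closed_nonneg_preimage shift_cont (closedU IHf IHg)).
Qed.

End CriticalTimes.

(** * The random critical set *)

Section RationalApproximation.
Variables (R : realType) (x : R -> R).
Hypothesis x_cont : {within `[0, +oo[, continuous x}.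

Lemma closed_hit_rat D t : closed D -> 0 <= t ->
  D (x t) <-> forall k : nat, exists q : rat, 0 <= ratr q :> R /\
    ball (ratr q : R) k.+1%:R^-1 t /\ (\bigcup_(y in D) ball y k.+1%:R^-1) (x (ratr q)).
Proof.
move=> cD t_ge0; split.
- move=> Dxt k; set e : R := k.+1%:R^-1; have e_gt0 : 0 < e by rewrite invr_gt0.
  have [e1 e1_gt0 He1] := nbhs_continuous_nonneg x_cont t_ge0 (nbhsx_ballx (x t) _ e_gt0).
  have [m_gt0 m_le1 m_le] := min_gt0_le e1_gt0 e_gt0.
  have t_lt : t < t + Num.min e1 e by lra.
  have [q] := rat_in_itvoo t_lt.
  rewrite in_itv /= => /andP[tq qt]; exists q; split; first lra.
  split; first by rewrite -ball_normE /= ltr_distl; apply/andP; split; lra.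
  exists (x t) => //; apply: He1; first lra.
  by rewrite ltr_distl; apply/andP; split; lra.
- move=> H; apply: contrapT => nD.
  have /nbhs_ballP[e0 /= e0_gt0 He0] : nbhs (x t) (~` D).
    by apply: open_nbhs_nbhs; split => //; rewrite openC.
  have e02_gt0 : 0 < e0 / 2 by lra.
  have [e1 e1_gt0 He1] := nbhs_continuous_nonneg x_cont t_ge0 (nbhsx_ballx (x t) _ e02_gt0).
  have [m_gt0 m_le1 m_le] := min_gt0_le e1_gt0 e02_gt0.
  have [k _ /(_ k (leqnn k)) /= ke] := near_infty_natSinv_lt (PosNum m_gt0).
  have ke1 := lt_le_trans ke m_le1; have ke2 := lt_le_trans ke m_le.
  have [q [q_ge0 [qt [y Dy yq]]]] := H k.
  set e : R := k.+1%:R^-1 in ke1 ke2 qt yq.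
  move: qt yq; rewrite -!ball_normE /= !ltr_distl => /andP[? ?] /andP[? ?].
  have /= := He1 (ratr q) q_ge0; rewrite -ball_normE /= !ltr_distl.
  move=> /(_ ltac:(apply/andP; split; lra)) /andP[? ?].
  by apply: (He0 y) => //; rewrite -ball_normE /= ltr_distl; apply/andP; split; lra.
Qed.

End RationalApproximation.

Lemma has_density_preimage_null d (T : measurableType d) (R : realType)
    (P : probability T R) (Y : T -> R) (A : set R) :
  has_density P Y -> measurable A -> lebesgue_measure A = 0%E -> P (Y @^-1` A) = 0%E.
Proof.
move=> [f [mf [f_ge0 Pf]]] mA A0; rewrite Pf //.
transitivity (\int[lebesgue_measure]_(y in A) `|(f y)%:E|)%E.
  by apply: eq_integral => y _; rewrite gee0_abs // lee_fin.
apply: integral_abs_eq0 => //.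
by apply/measurable_realfun.measurable_EFinP; exact: measurable_funS mf.
Qed.

Lemma negligible_bigcup_seq d (T : ringOfSetsType d) (R : realFieldType)
    (mu : {content set T -> \bar R}) (I : choiceType) (s : seq I) (F : I -> set T) :
  (forall i, i \in s -> mu.-negligible (F i)) -> mu.-negligible (\bigcup_(i in [set` s]) F i).
Proof.
move=> F0; rewrite bigcup_seq big_seq.
by elim/big_ind: _ => //; [exact: negligible_set0|exact: negligibleU].
Qed.

Lemma ae_xsection_null d1 d2 (T1 : measurableType d1) (T2 : measurableType d2)
    (R : realType) (m1 : {sigma_finite_measure set T1 -> \bar R})
    (m2 : {sigma_finite_measure set T2 -> \bar R}) (U : set (T1 * T2)) :
  measurable U -> (forall y, m1 (ysection U y) = 0%E) ->
  {ae m1, forall x, m2 (xsection U x) = 0%E}.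
Proof.
move=> mU U_y0.
have pm2 : (m1 \x^ m2)%E U = 0%E by apply: integral0_eq => y _; exact: U_y0.
have pm1 : (m1 \x m2)%E U = 0%E.
  rewrite (product_measure_unique (m' := (m1 \x^ m2)%E) _ mU) //.
  by move=> A1 A2 mA1 mA2; exact: product_measure2E.
have mU_x := lebesgue_integral_fubini.measurable_fun_xsection m2 mU.
have /(ae_eq_integral_abs m1 measurableT mU_x).1 : 
    (\int[m1]_(x in setT) `|m2 (xsection U x)|)%E = 0%E.
  by rewrite -pm1; apply: eq_integral => x _; rewrite gee0_abs.
by apply: filterS => x /(_ I).
Qed.

Section CriticalEvents.
Context (d : measure_display) (T : measurableType d) (R : realType)
  (P : probability T R) (X : R -> T -> R) (AP : Type) (B : AP -> set R) (N : set T).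
Hypotheses (mX : forall t, 0 <= t -> measurable_fun setT (X t)) (mN : measurable N).
Hypothesis X_cont : forall w, ~ N w -> {within `[0, +oo[, continuous (X^~ w)}.

Lemma measurable_hit D : closed D ->
  measurable [set z : T * R | ~ N z.1 /\ 0 <= z.2 /\ D (X z.2 z.1)].
Proof.
move=> cD; pose Dk (k : nat) := \bigcup_(y in D) ball y (k.+1%:R^-1 : R).
pose A k (q : rat) := [set w | 0 <= ratr q :> R /\ Dk k (X (ratr q) w)].
have mA k q : measurable (A k q).
  have [q_ge0|q_lt0] := boolP (0 <= ratr q :> R); last first.
    rewrite (_ : A k q = set0) //; apply/seteqP; split => w // [q_ge0 _].
    by move/negP: q_lt0.
  rewrite (_ : A k q = X (ratr q) @^-1` Dk k); last first.
    by apply/seteqP; split => w /=; [case|split].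
  rewrite -[_ @^-1` _]setTI; apply: mX q_ge0 measurableT _ _.
  by apply: measurable_realfun.open_measurable; apply: bigcup_open => y _; exact: ball_open.
have -> : [set z : T * R | ~ N z.1 /\ 0 <= z.2 /\ D (X z.2 z.1)] =
    (~` N `*` `[0, +oo[) `&`
    \bigcap_k \bigcup_q (A k q `*` ball (ratr q : R) k.+1%:R^-1).
  apply/seteqP; split => -[w t] /=; rewrite in_itv /= andbT.
  - move=> [nN [t_ge0 Dx]]; split => // k _.
    have [q [q_ge0 [qt Dq]]] := (closed_hit_rat (X_cont nN) cD t_ge0).1 Dx k.
    by exists q.
  - move=> [[nN t_ge0] H]; split => //; split => //.
    apply/(closed_hit_rat (X_cont nN) cD t_ge0) => k.
    by have [q _ [[q_ge0 Dq] qt]] := H k I; exists q.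
apply: measurableI; first by apply: measurableX; [exact: measurableC|exact: measurable_itv].
apply: bigcapT_measurable => k; apply: bigcupT_measurable_rat => q.
exact: measurableX (mA k q) (measurable_realfun.measurable_ball _ _).
Qed.

(* Time [0] is left out since [X 0] need not have a density; [bdry_cover] adds
   it back. *)
Definition crit_event (phi : mtl R AP) : set (T * R) :=
  [set z | ~ N z.1 /\ 0 < z.2 /\ mtl_crit B (X^~ z.1) phi z.2].

Lemma crit_event_until J f g : crit_event (MUntil J f g) = crit_event f `|`
  \bigcup_(c in [set` [seq c <- itv_ends J | 0 <= c]])
    ((setT `*` `]0, +oo[) `&` (fun z => (z.1, z.2 + c)) @^-1` (crit_event f `|` crit_event g)).
Proof.
apply/seteqP; split => -[w t] /=.
- move=> [nN [t_gt0 [Ft|[c cE [_ FGc]]]]]; [by left|right; exists c => //].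
  have c_ge0 : 0 <= c by move: cE => /=; rewrite mem_filter => /andP[].
  split; first by split => //=; rewrite in_itv /= andbT.
  have tc_gt0 : 0 < t + c by move: t_gt0 => /=; lra.
  by case: FGc => ?; [left|right]; do 2 split => //.
- move=> [[nN [t_gt0 Ft]]|[c cE [[_ t_pos] FGc]]]; first by split => //; split => //; left.
  move: t_pos; rewrite /= in_itv /= andbT => t_gt0.
  by case: FGc => -[nN [_ FGc]]; do 2 split => //; right; exists c => //;
    (split; first exact: ltW); [left|right].
Qed.

Lemma measurable_crit_event phi : measurable (crit_event phi).
Proof.
elim: phi => [|a|f IH|f IHf g IHg|J f IHf g IHg] //.
- by rewrite (_ : crit_event _ = set0) //; apply/seteqP; split => -[w t] // [_ []].
- rewrite (_ : crit_event _ = [set z | ~ N z.1 /\ 0 <= z.2 /\ bdry (B a) (X z.2 z.1)] `&`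
      (setT `*` `]0, +oo[)).
    apply: measurableI; first exact: measurable_hit (@closed_bdry _ (B a)).
    by apply: measurableX => //; exact: measurable_itv.
  apply/seteqP; split => -[w t] /=; rewrite in_itv /= andbT.
    by move=> [nN [t_gt0 [t_ge0 Bt]]].
  by move=> [[nN [t_ge0 Bt]] [_ t_gt0]].
- rewrite (_ : crit_event _ = crit_event f `|` crit_event g); first exact: measurableU.
  apply/seteqP; split => -[w t] /=; first by move=> [nN [t_gt0 [Ft|Gt]]]; [left|right].
  by move=> [|] [nN [t_gt0 ?]]; do 2 split => //; [left|right].
rewrite crit_event_until; apply: measurableU => //.
rewrite bigcup_seq; apply: bigsetU_measurable => c _.
apply: measurableI; first by apply: measurableX => //; exact: measurable_itv.
have mshift : measurable_fun setT (fun z : T * R => (z.1, z.2 + c)).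
  apply: measurable_fun_pair; first exact: measurable_fst.
  by apply: measurable_realfun.measurable_funD; [exact: measurable_snd|exact: measurable_cst].
by rewrite -[_ @^-1` _]setTI; apply: mshift => //; exact: measurableU.
Qed.

Hypothesis X_dens : forall t, 0 < t -> has_density P (X t).
Hypothesis bdryB0 : forall a, lebesgue_measure (bdry (B a)) = 0%E.

Lemma negligible_crit_event_ysection phi t : 0 < t ->
  P.-negligible [set w | crit_event phi (w, t)].
Proof.
elim: phi t => [|a|f IH|f IHf g IHg|J f IHf g IHg] t t_gt0.
- by apply: negligibleS (negligible_set0 P) => w [_ []].
- have mbdry : measurable (bdry (B a)).
    exact: measurable_realfun.closed_measurable (@closed_bdry _ (B a)).
  exists (X t @^-1` bdry (B a)); split.
  + by rewrite -[_ @^-1` _]setTI; exact: mX (ltW t_gt0) measurableT _ mbdry.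
  + exact: has_density_preimage_null (X_dens t_gt0) mbdry (bdryB0 a).
  + by move=> w [_ [_ [_ ?]]].
- exact: IH.
- apply: negligibleS (negligibleU (IHf t t_gt0) (IHg t t_gt0)).
  by move=> w [nN [t0 [?|?]]]; [left|right].
pose cs := [seq c <- itv_ends J | 0 <= c].
have shifted : P.-negligible (\bigcup_(c in [set` cs])
    ([set w | crit_event f (w, t + c)] `|` [set w | crit_event g (w, t + c)])).
  apply: negligible_bigcup_seq => c; rewrite mem_filter => /andP[c_ge0 _].
  have tc_gt0 : 0 < t + c by lra.
  exact: negligibleU (IHf _ tc_gt0) (IHg _ tc_gt0).
apply: negligibleS (negligibleU (IHf t t_gt0) shifted) => w.
by rewrite crit_event_until => -[?|[c cE [_ FGc]]]; [left|right; exists c].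
Qed.

Lemma crit_event_ysection_null phi t : P (ysection (crit_event phi) t) = 0%E.
Proof.
have [t_gt0|t_le0] := ltP 0 t.
  apply: measure_negligible; first exact: measurable_ysection (measurable_crit_event phi).
  by apply: negligibleS (negligible_crit_event_ysection phi t_gt0) => w; rewrite /ysection /= inE.
rewrite (_ : ysection _ t = set0) ?measure0 //; apply/seteqP; split => w //.
by rewrite /ysection /= inE => -[_ [/= ? _]]; lra.
Qed.

Definition bdry_cover phi : set (T * R) :=
  (setT `*` [set 0]) `|` (N `*` `[0, +oo[) `|` crit_event phi.

Lemma measurable_bdry_cover phi : measurable (bdry_cover phi).
Proof.
apply: measurableU (measurable_crit_event phi); apply: measurableU.
  by apply: measurableX => //; exact: measurable_set1.
by apply: measurableX => //; exact: measurable_itv.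
Qed.

Lemma bdry_cover_nonneg phi : bdry_cover phi `<=` setT `*` `[0, +oo[.
Proof.
move=> [w t] [[[_ /= ->]|[_ //]]|[_ [/= t_gt0 _]]]; split => //=.
  by rewrite in_itv /= lexx.
by rewrite in_itv /= andbT ltW.
Qed.

Lemma bdry_cover_xsection phi w : ~ N w ->
  [set t | bdry_cover phi (w, t)] = [set 0] `|` xsection (crit_event phi) w.
Proof.
move=> nN; apply/seteqP; split => t; rewrite /xsection /= inE.
  by move=> [[[_ /= ->]|[/nN]]|?] //; [left|right].
by move=> [->|?]; [left; left|right].
Qed.

Lemma bdry_cover_crit phi w : ~ N w ->
  [set t | bdry_cover phi (w, t)] = [set 0] `|` mtl_crit B (X^~ w) phi.
Proof.
move=> nN; rewrite bdry_cover_xsection //; apply/seteqP; split => t.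
  by move=> [->|]; [left|rewrite /xsection /= inE => -[_ [_ ?]]; right].
move=> [->|Ct]; first by left.
have [->|t_ne0] := eqVneq t 0; first by left.
right; rewrite /xsection /= inE; do 2 split => //.
by rewrite lt_neqAle eq_sym t_ne0 (mtl_crit_ge0 Ct).
Qed.

Hypothesis PN0 : P N = 0%E.

Let ae_notN : {ae P, forall w, ~ N w}.
Proof. by exists N; split => // w /= /contrapT. Qed.

Lemma ae_closed_bdry_cover phi : {ae P, forall w, closed [set t | bdry_cover phi (w, t)]}.
Proof.
apply: filterS ae_notN => w nN; rewrite bdry_cover_crit //.
apply: closedU; last exact: (closed_mtl_crit (B := B) (phi := phi) (X_cont nN)).
by rewrite -set_itv1; exact: itv_closed.
Qed.

Lemma ae_bdry_cover_null phi :
  {ae P, forall w, lebesgue_measure [set t | bdry_cover phi (w, t)] = 0%E}.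
Proof.
have Cx0 := ae_xsection_null lebesgue_measure (measurable_crit_event phi)
  (crit_event_ysection_null phi).
apply: filterS2 ae_notN Cx0 => w nN Cw0; rewrite bdry_cover_xsection // measureU0 //.
- exact: lebesgue_measure_set1.
- exact: measurable_xsection (measurable_crit_event phi).
Qed.

Lemma bdry_cover_ysection_null phi t : 0 < t -> P [set w | bdry_cover phi (w, t)] = 0%E.
Proof.
move=> t_gt0; apply: measure_negligible.
  rewrite (_ : [set w | _] = ysection (bdry_cover phi) t).
    exact: measurable_ysection (measurable_bdry_cover phi).
  by apply/seteqP; split => w; rewrite /ysection /= inE.
have negN : P.-negligible N by exists N; split.
apply: negligibleS (negligibleU negN (negligible_crit_event_ysection phi t_gt0)).
by move=> w [[[_ /= t0]|[Nw _]]|?]; [lra|left|right].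
Qed.

Lemma bdry0_mtl_sem_bdry_cover phi w : mtl_wf phi ->
  bdry0 (mtl_sem B (X^~ w) phi) `<=` [set t | bdry_cover phi (w, t)].
Proof.
move=> wf t /bdry0_nonneg bt; have t_ge0 := bt.1.
have [Nw|nN] := pselect (N w); first by left; right; split => //=; rewrite in_itv /= t_ge0.
by rewrite bdry_cover_crit //; right; exact: (bdry0_mtl_sat (B := B) (X_cont nN) wf bt).
Qed.

End CriticalEvents.

Unset Implicit Arguments.
Set Strict Implicit.

Theorem lemma6p14 (d : measure_display) (T : measurableType d) (R : realType)
  (P : probability T R) (X : R -> T -> R) (AP : Type) (B : AP -> set R) :
  measure_is_complete P ->
  (forall t : R, 0 <= t -> measurable_fun setT (X t)) ->
  {ae P, forall w : T, {within `[0, +oo[, continuous (fun t : R => X t w)}} ->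
  (forall t : R, 0 < t -> has_density P (X t)) ->
  (forall a : AP, measurable (B a)) ->
  (forall a : AP, (@lebesgue_measure R) (bdry (B a)) = 0%E) ->
  forall phi : mtl R AP, mtl_wf phi ->
  exists K : set (T * R),
    measurable K /\ K `<=` setT `*` `[0, +oo[ /\
    {ae P, forall w : T, closed [set t | K (w, t)]} /\
    {ae P, forall w : T, (@lebesgue_measure R) [set t | K (w, t)] = 0%E} /\
    (forall t : R, 0 < t -> P [set w | K (w, t)] = 0%E) /\
    (forall w : T, bdry0 (mtl_sem B (fun t => X t w) phi) `<=` [set t | K (w, t)]).
Proof.
move=> _ mX [N [mN PN0 N_cont]] X_dens _ bdryB0 phi wf.
have X_cont w : ~ N w -> {within `[0, +oo[, continuous (X^~ w)}.
  by move=> nN; apply: contrapT => /N_cont.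
exists (bdry_cover X B N phi); split; first exact: measurable_bdry_cover.
split; first exact: bdry_cover_nonneg.
split; first exact: ae_closed_bdry_cover.
split; first exact: ae_bdry_cover_null.
split; first exact: bdry_cover_ysection_null.
by move=> w; exact: bdry0_mtl_sem_bdry_cover.
Qed.
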